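(* Let $\mu$ be a distribution on $\Sigma\times\Gamma$ (finite sets) and $t:\mathsf{supp}(\mu)\to\mathbb{Z}_m$, defining a two-player $\mathsf{XOR}$ game $\mathcal{G}$ that is connected and has value less than $1$. Let $T(x,y)=\omega^{-t(x,y)}$ with $\omega=e^{2\pi i/m}$. Then there is a constant $c=c(\mathcal{G},\mu)>0$ such that for all $n$ and all $F:\Sigma^n\to\mathbb{D}$, $G:\Gamma^n\to\mathbb{D}$, $$\left|\mathbb{E}_{(x,y)\sim\mu^{\otimes n}}\Big[F(x)G(y)\prod_{i=1}^nT(x_i,y_i)\Big]\right|\le 2^{-cn}.$$
   Context: $\mathbb{D}$ is the closed unit disk in $\mathbb{C}$. The game is connected if the bipartite graph on vertex set $\Sigma\sqcup\Gamma$ with edge set $\mathsf{supp}(\mu)$ is connected. The value of the game is $\max_{f:\Sigma\to\mathbb{Z}_m,\,g:\Gamma\to\mathbb{Z}_m}\Pr_{(x,y)\sim\mu}[f(x)+g(y)=t(x,y)]$. *)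

From mathcomp Require Import all_boot all_order all_algebra.
From mathcomp Require Import all_classical all_reals all_analysis.
From mathcomp.real_closed Require Import complex.
Set Implicit Arguments.
Unset Strict Implicit.
Unset Printing Implicit Defensive.
Import Order.TTheory GRing.Theory Num.Theory.
Local Open Scope ring_scope.
Local Open Scope complex_scope.

Section XorGame.
Variables (R : realType) (Sigma Gamma : finType) (m : nat).

Definition is_distr (mu : Sigma -> Gamma -> R) : Prop :=
  (forall x y, 0 <= mu x y) /\ \sum_(x : Sigma) \sum_(y : Gamma) mu x y = 1.

Definition supp_graph (mu : Sigma -> Gamma -> R) : rel (Sigma + Gamma) :=
  fun u v => match u, v with
             | inl x, inr y => 0 < mu x y
             | inr y, inl x => 0 < mu x y
             | _, _ => false
             end.

Definition game_connected (mu : Sigma -> Gamma -> R) : Prop :=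
  forall u v : Sigma + Gamma, connect (supp_graph mu) u v.

Definition win_prob (mu : Sigma -> Gamma -> R) (t : Sigma -> Gamma -> 'Z_m)
  (f : {ffun Sigma -> 'Z_m}) (g : {ffun Gamma -> 'Z_m}) : R :=
  \sum_(x : Sigma) \sum_(y : Gamma | f x + g y == t x y) mu x y.

(* value of the game: max over all strategies f, g (the max of a finite
   nonempty family of nonnegative reals, so the 0 seed is harmless) *)
Definition game_value (mu : Sigma -> Gamma -> R) (t : Sigma -> Gamma -> 'Z_m) : R :=
  \big[Num.max/0]_(f : {ffun Sigma -> 'Z_m})
    \big[Num.max/0]_(g : {ffun Gamma -> 'Z_m}) win_prob mu t f g.

Definition omega : R[i] := cos (pi *+ 2 / m%:R) +i* sin (pi *+ 2 / m%:R).

Definition Tchar (t : Sigma -> Gamma -> 'Z_m) (x : Sigma) (y : Gamma) : R[i] :=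
  omega ^- (val (t x y)).

Definition xor_correlation (mu : Sigma -> Gamma -> R) (t : Sigma -> Gamma -> 'Z_m)
  (n : nat) (F : {ffun 'I_n -> Sigma} -> R[i]) (G : {ffun 'I_n -> Gamma} -> R[i]) : R[i] :=
  \sum_(x : {ffun 'I_n -> Sigma}) \sum_(y : {ffun 'I_n -> Gamma})
     (\prod_(i < n) mu (x i) (y i))%:C * F x * G y * \prod_(i < n) Tchar t (x i) (y i).

End XorGame.

(* Let (A h)(x) = E[T(x,y) h(y) | x] be the one-coordinate operator from
   L^2(mu_Y) to L^2(mu_X).  The correlation is E_x[F(x) (A^{(x)n} G)(x)], so it
   is at most |A^{(x)n} G| <= r^n |G| as soon as |A h| <= r |h| with r < 1;
   then c = -log2 r.
   The contraction comes from the frustration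
   Q(f,g) = E_mu |f(x) - omega^{t(x,y)} g(y)|^2.  If Q is small then, walking
   along paths of the connected support graph, every value f(x), g(y) is close
   to a rotation omega^{k_v} z of one common z.  The rotation indices form a
   strategy, which loses on some edge because the value is < 1; on that edge
   two different rotations of z are close, so z is small.  Hence
   |f|^2 + |g|^2 <= C Q(f,g), and since
   Q(f, conj h) = |f|^2 + |h|^2 - 2 Re <f, A h>, this gives
   2 Re <f, A h> <= r (|f|^2 + |h|^2) with r < 1, i.e. |A| <= r. *)

From mathcomp Require Import all_boot all_order all_algebra.
From mathcomp Require Import all_classical all_reals all_analysis.
From mathcomp.real_closed Require Import complex.
From mathcomp Require Import lra ring.
Set Implicit Arguments.
Unset Strict Implicit.
Unset Printing Implicit Defensive.
Import Order.TTheory GRing.Theory Num.Theory.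
Local Open Scope ring_scope.
Local Open Scope complex_scope.

Lemma ler_sum_term (R : numDomainType) (I : finType) (F : I -> R) i :
  (forall j, 0 <= F j) -> F i <= \sum_j F j.
Proof. by move=> F_ge0; rewrite (bigD1 i) //= lerDl sumr_ge0. Qed.

Lemma exists_inv_bound (R : realFieldType) (I : finType) (P : pred I) (F : I -> R) :
  (forall i, P i -> 0 < F i) -> exists2 c, 0 <= c & forall i, P i -> 1 <= c * F i.
Proof.
move=> F_gt0; exists (\sum_(i | P i) (F i)^-1).
  by apply: sumr_ge0 => i /F_gt0 /ltW; rewrite invr_ge0.
move=> i Pi; rewrite -ler_pdivrMr ?F_gt0 // div1r (bigD1 i) //= lerDl.
by apply: sumr_ge0 => j /andP[/F_gt0 /ltW]; rewrite invr_ge0.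
Qed.

Section ComplexModulus.
Variable R : realType.
Implicit Types (z w u : R[i]) (a : R).

Definition normc2 z : R := complex.Re z ^+ 2 + complex.Im z ^+ 2.

Lemma normc2E z : (normc2 z)%:C = `|z| ^+ 2.
Proof. exact: add_Re2_Im2. Qed.

Lemma normc2_ge0 z : 0 <= normc2 z.
Proof. by rewrite addr_ge0 ?sqr_ge0. Qed.

Lemma normc2_eq0 z : (normc2 z == 0) = (z == 0).
Proof.
case: z => a b; rewrite /normc2 /= paddr_eq0 ?sqr_ge0 // !sqrf_eq0.
by apply/andP/eqP => [[/eqP-> /eqP->] | [-> ->]].
Qed.

Lemma normc2_gt0 z : z != 0 -> 0 < normc2 z.
Proof. by rewrite lt_def normc2_ge0 normc2_eq0 andbT. Qed.

Lemma normc2M z w : normc2 (z * w) = normc2 z * normc2 w.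
Proof. by case: z w => [a b] [c d]; rewrite /normc2 /=; ring. Qed.

Lemma normc2N z : normc2 (- z) = normc2 z.
Proof. by case: z => a b; rewrite /normc2 /= !sqrrN. Qed.

Lemma normc2J z : normc2 z^* = normc2 z.
Proof. by case: z => a b; rewrite /normc2 /= sqrrN. Qed.

Lemma normc2_real a : normc2 a%:C = a ^+ 2.
Proof. by rewrite /normc2 /= expr0n addr0. Qed.

Lemma mulcJ z : z * z^* = (normc2 z)%:C.
Proof. by case: z => a b; rewrite /normc2 /=; congr (_ +i* _); ring. Qed.

Lemma ReD z w : complex.Re (z + w) = complex.Re z + complex.Re w.
Proof. by case: z w => [a b] [c d]. Qed.

Lemma Re_sum (I : Type) (r : seq I) (P : pred I) (F : I -> R[i]) :
  complex.Re (\sum_(i <- r | P i) F i) = \sum_(i <- r | P i) complex.Re (F i).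
Proof. by elim/big_rec2: _ => // i x y _ <-; rewrite ReD. Qed.

Lemma Im_sum (I : Type) (r : seq I) (P : pred I) (F : I -> R[i]) :
  complex.Im (\sum_(i <- r | P i) F i) = \sum_(i <- r | P i) complex.Im (F i).
Proof. by elim/big_rec2: _ => // i x y _ <-; case: (F i) y => [a b] [c d]. Qed.

Lemma normc2B z w : normc2 (z - w) = normc2 z + normc2 w - 2 * complex.Re (z * w^*).
Proof. by case: z w => [a b] [c d]; rewrite /normc2 /=; ring. Qed.

Lemma normc2D_le z w : normc2 (z + w) <= 2 * normc2 z + 2 * normc2 w.
Proof.
case: z w => [a b] [c d]; rewrite /normc2 /= -subr_ge0.
have -> : 2 * (a ^+ 2 + b ^+ 2) + 2 * (c ^+ 2 + d ^+ 2) - ((a + c) ^+ 2 + (b + d) ^+ 2)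
  = (a - c) ^+ 2 + (b - d) ^+ 2 by ring.
by rewrite addr_ge0 ?sqr_ge0.
Qed.

Lemma normc2D3_le z w u :
  normc2 (z + w + u) <= 3 * (normc2 z + normc2 w + normc2 u).
Proof.
case: z w u => [a b] [c d] [e f]; rewrite /normc2 /= -subr_ge0.
have -> : 3 * (a ^+ 2 + b ^+ 2 + (c ^+ 2 + d ^+ 2) + (e ^+ 2 + f ^+ 2))
    - ((a + c + e) ^+ 2 + (b + d + f) ^+ 2)
  = (a - c) ^+ 2 + (a - e) ^+ 2 + (c - e) ^+ 2
    + ((b - d) ^+ 2 + (b - f) ^+ 2 + (d - f) ^+ 2) by ring.
by rewrite !addr_ge0 ?sqr_ge0.
Qed.

Lemma normc2_le1 z : `|z| <= 1 -> normc2 z <= 1.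
Proof. by rewrite -lecR normc2E rmorph1 => ?; rewrite exprn_ile1. Qed.

Lemma normc_le z a :
  0 <= a -> normc2 z <= a ^+ 2 -> `|z| <= a%:C.
Proof.
move=> a_ge0; rewrite -lecR normc2E rmorphXn /=.
by rewrite ler_sqr // nnegrE ?ler0c.
Qed.

End ComplexModulus.

Section Convexity.
Variables (R : realType) (I : finType) (w : I -> R).
Hypothesis w_ge0 : forall i, 0 <= w i.
Hypothesis w_sum1 : \sum_i w i = 1.

Lemma sqr_wsum_le (a : I -> R) : (\sum_i w i * a i) ^+ 2 <= \sum_i w i * a i ^+ 2.
Proof.
have expand c : \sum_i w i * (a i - c) ^+ 2
    = \sum_i w i * a i ^+ 2 - 2 * c * \sum_i w i * a i + c ^+ 2 * \sum_i w i.
  by rewrite !mulr_sumr -sumrB -big_split /=; apply: eq_bigr => i _; ring.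
rewrite -subr_ge0; have := expand (\sum_i w i * a i); rewrite w_sum1.
have -> : \sum_i w i * a i ^+ 2 - 2 * (\sum_i w i * a i) * (\sum_i w i * a i)
    + (\sum_i w i * a i) ^+ 2 * 1 = \sum_i w i * a i ^+ 2 - (\sum_i w i * a i) ^+ 2 by ring.
by move=> <-; apply: sumr_ge0 => i _; rewrite mulr_ge0 ?sqr_ge0.
Qed.

Lemma normc2_wsum_le (z : I -> R[i]) :
  normc2 (\sum_i (w i)%:C * z i) <= \sum_i w i * normc2 (z i).
Proof.
have ReW i : complex.Re ((w i)%:C * z i) = w i * complex.Re (z i).
  by case: (z i) => a b /=; ring.
have ImW i : complex.Im ((w i)%:C * z i) = w i * complex.Im (z i).
  by case: (z i) => a b /=; ring.
rewrite /normc2 Re_sum Im_sum.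
under eq_bigr do rewrite ReW.
under [X in _ + X ^+ 2]eq_bigr do rewrite ImW.
under [X in _ <= X]eq_bigr do rewrite mulrDr.
by rewrite big_split lerD // sqr_wsum_le.
Qed.

End Convexity.

Lemma cis_natM (R : realType) (th : R) (n : nat) :
  (cos th +i* sin th) ^+ n = cos (n%:R * th) +i* sin (n%:R * th).
Proof.
elim: n => [|n IH]; first by rewrite expr0 mul0r cos0 sin0.
rewrite exprS IH /= -natr1 mulrDl mul1r addrC cosD sinD.
by congr (_ +i* _); ring.
Qed.

Section RootsOfUnity.
Variables (R : realType) (m : nat).
Hypothesis m_gt1 : (1 < m)%N.
Local Notation omega := (omega R m).

Lemma normc2_omega : normc2 omega = 1.
Proof. exact: cos2Dsin2. Qed.

Lemma omega_expm : omega ^+ m = 1.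
Proof.
rewrite /omega cis_natM mulrCA mulfV ?mulr1 ?pnatr_eq0 -?lt0n ?(ltnW m_gt1) //.
by rewrite cos2pi sin2pi.
Qed.

Lemma omega_exp_neq1 j : (0 < j < m)%N -> omega ^+ j != 1.
Proof.
case/andP=> j_gt0 j_ltm; rewrite /omega cis_natM; apply/negP => /eqP [] cos1 sin0.
have m_gt0 : 0 < m%:R :> R by rewrite ltr0n (ltn_trans j_gt0 j_ltm).
set th := j%:R * _ in cos1 sin0.
have th_gt0 : 0 < th by rewrite mulr_gt0 ?ltr0n // divr_gt0 // mulrn_wgt0 // pi_gt0.
have th_lt2pi : th < pi *+ 2.
  rewrite /th mulrA ltr_pdivrMr // mulrC ltr_pM2l ?ltr_nat //.
  by rewrite mulrn_wgt0 // pi_gt0.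
have [th_ltpi|th_gtpi|th_pi] := ltgtP th pi.
- by move: (@sin_gt0_pi R th); rewrite th_gt0 th_ltpi sin0 ltxx => /(_ isT).
- have := @sin_gt0_pi R (th - pi).
  rewrite subr_gt0 th_gtpi ltrBlDr -mulr2n th_lt2pi => /(_ isT).
  by rewrite -[sin _]opprK -sinDpi subrK sin0 oppr0 ltxx.
- by move: cos1; rewrite th_pi cospi; lra.
Qed.

Definition omegaZ (a : 'Z_m) : R[i] := omega ^+ val a.

Lemma omega_expmod p : omega ^+ (p %% m) = omega ^+ p.
Proof. by rewrite {2}(divn_eq p m) exprD mulnC exprM omega_expm expr1n mul1r. Qed.

Lemma omegaZD a b : omegaZ (a + b) = omegaZ a * omegaZ b.
Proof.
rewrite /omegaZ /= -exprD -[in RHS]omega_expmod.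
by congr (_ ^+ (_ %% _)); exact: Zp_cast.
Qed.

Lemma omegaZ0 : omegaZ 0 = 1.
Proof. exact: expr0. Qed.

Lemma omegaZN a : omegaZ (- a) * omegaZ a = 1.
Proof. by rewrite -omegaZD addNr omegaZ0. Qed.

Lemma normc2_omegaZ a : normc2 (omegaZ a) = 1.
Proof.
rewrite /omegaZ; elim: (val a) => [|k IH]; first by rewrite expr0 normc2_real expr1n.
by rewrite exprS normc2M IH normc2_omega mulr1.
Qed.

Lemma omegaZ_neq1 a : a != 0 -> omegaZ a != 1.
Proof.
move=> a_neq0; apply: omega_exp_neq1; rewrite lt0n.
have -> : (val a != 0%N) by apply: contra a_neq0 => /eqP a0; apply/eqP/val_inj.
by rewrite -[X in (_ < X)%N](Zp_cast m_gt1) ltn_ord.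
Qed.

Lemma omegaZ_gap : exists2 gamma, 0 <= gamma &
  forall a : 'Z_m, a != 0 -> 1 <= gamma * normc2 (omegaZ a - 1).
Proof.
by apply: exists_inv_bound => a a0; rewrite normc2_gt0 // subr_eq0 omegaZ_neq1.
Qed.

Lemma Tchar_omegaZ (Sigma Gamma : finType) (t : Sigma -> Gamma -> 'Z_m) x y :
  Tchar R t x y = (omegaZ (t x y))^*.
Proof.
have nz : omegaZ (t x y) != 0 by rewrite -normc2_eq0 normc2_omegaZ oner_eq0.
by rewrite /Tchar -[RHS]mul1r -(mulVf nz) -mulrA mulcJ normc2_omegaZ mulr1.
Qed.

End RootsOfUnity.

Section FfunCons.
Variables (T : finType) (n : nat).

Definition fcons (a : T) (f : {ffun 'I_n -> T}) : {ffun 'I_n.+1 -> T} :=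
  [ffun i => if unlift ord0 i is Some j then f j else a].

Lemma fcons0 a f : fcons a f ord0 = a.
Proof. by rewrite ffunE unlift_none. Qed.

Lemma fconsS a f j : fcons a f (lift ord0 j) = f j.
Proof. by rewrite ffunE liftK. Qed.

Lemma big_fcons (V : nmodType) (F : {ffun 'I_n.+1 -> T} -> V) :
  \sum_x F x = \sum_a \sum_(f : {ffun 'I_n -> T}) F (fcons a f).
Proof.
rewrite pair_big /= (reindex (fun af : T * {ffun 'I_n -> T} => fcons af.1 af.2)) //.
exists (fun x : {ffun 'I_n.+1 -> T} => (x ord0, [ffun j : 'I_n => x (lift ord0 j)])).
  by move=> [a f] _ /=; rewrite fcons0; congr (_, _); apply/ffunP => j; rewrite ffunE fconsS.
by move=> x _; apply/ffunP => i; rewrite ffunE; case: unliftP => [j|] ->; rewrite ?ffunE.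
Qed.

Lemma prod_fcons (V : comPzSemiRingType) (P : T -> V) a f :
  \prod_(i < n.+1) P (fcons a f i) = P a * \prod_(i < n) P (f i).
Proof. by rewrite big_ord_recl fcons0; under eq_bigr do rewrite fconsS. Qed.

End FfunCons.

Lemma prod_fcons2 (V : comPzSemiRingType) (S T : finType) n (P : S -> T -> V) a b
    (f : {ffun 'I_n -> S}) (g : {ffun 'I_n -> T}) :
  \prod_(i < n.+1) P (fcons a f i) (fcons b g i) = P a b * \prod_(i < n) P (f i) (g i).
Proof. by rewrite big_ord_recl !fcons0; under eq_bigr do rewrite !fconsS. Qed.

Lemma big_ffun0 (V : nmodType) (T : finType) (F : {ffun 'I_0 -> T} -> V) x0 :
  \sum_x F x = F x0.
Proof. by rewrite (big_pred1 x0) // => x; apply/esym/eqP/ffunP => -[]. Qed.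

Section Tensorization.
Variable R : realType.

Definition wnorm2 (A : finType) (w : A -> R) (f : A -> R[i]) : R :=
  \sum_a w a * normc2 (f a).

Definition kapply (A B : finType) (K : A -> B -> R[i]) (h : B -> R[i]) (a : A) : R[i] :=
  \sum_b K a b * h b.

Definition tensor_weight (A : finType) (w : A -> R) n (x : {ffun 'I_n -> A}) : R :=
  \prod_(i < n) w (x i).
Arguments tensor_weight {A} w {n} x.

Definition tensor_kernel (A B : finType) (K : A -> B -> R[i]) n
    (x : {ffun 'I_n -> A}) (y : {ffun 'I_n -> B}) : R[i] :=
  \prod_(i < n) K (x i) (y i).
Arguments tensor_kernel {A B} K {n} x y.

Lemma tensor_weight_ge0 (A : finType) (w : A -> R) n (x : {ffun 'I_n -> A}) :
  (forall a, 0 <= w a) -> 0 <= tensor_weight w x.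
Proof. by move=> w_ge0; apply: prodr_ge0. Qed.

Lemma sum_tensor_weight (A : finType) (w : A -> R) n :
  \sum_(x : {ffun 'I_n -> A}) tensor_weight w x = (\sum_a w a) ^+ n.
Proof.
by rewrite /tensor_weight -(bigA_distr_bigA (fun _ : 'I_n => w)) /= prodr_const card_ord.
Qed.

Variables (I J : finType) (p : I -> R) (q : J -> R) (K : I -> J -> R[i]) (s : R).
Hypothesis p_ge0 : forall a, 0 <= p a.
Hypothesis q_ge0 : forall b, 0 <= q b.
Hypothesis s_ge0 : 0 <= s.
Hypothesis K_contraction : forall h, wnorm2 p (kapply K h) <= s * wnorm2 q h.

Lemma tensor_contraction n (G : {ffun 'I_n -> J} -> R[i]) :
  wnorm2 (tensor_weight p) (kapply (tensor_kernel K) G)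
    <= s ^+ n * wnorm2 (tensor_weight q) G.
Proof.
elim: n G => [|n IH] G.
  rewrite /wnorm2 /kapply /tensor_weight /tensor_kernel expr0 mul1r.
  by rewrite !(big_ffun0 _ (ffun0 (card_ord 0))) !big_ord0 !mul1r.
pose Gb b g := G (fcons b g).
pose H f b := kapply (tensor_kernel K) (Gb b) f.
have kapply_fcons a f : kapply (tensor_kernel K) G (fcons a f) = kapply K (H f) a.
  rewrite /kapply big_fcons; apply: eq_bigr => b _; rewrite mulr_sumr.
  by apply: eq_bigr => g _; rewrite /tensor_kernel prod_fcons2 mulrA.
have -> : wnorm2 (tensor_weight p) (kapply (tensor_kernel K) G)
    = \sum_f tensor_weight p f * wnorm2 p (kapply K (H f)).
  rewrite /wnorm2 big_fcons exchange_big; apply: eq_bigr => f _; rewrite mulr_sumr.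
  by apply: eq_bigr => a _; rewrite /tensor_weight prod_fcons kapply_fcons mulrA (mulrC (p a)).
have -> : wnorm2 (tensor_weight q) G = \sum_b q b * wnorm2 (tensor_weight q) (Gb b).
  rewrite /wnorm2 big_fcons; apply: eq_bigr => b _; rewrite mulr_sumr.
  by apply: eq_bigr => g _; rewrite /tensor_weight prod_fcons mulrA.
apply: (@le_trans _ _ (\sum_f tensor_weight p f * (s * wnorm2 q (H f)))).
  by apply: ler_sum => f _; rewrite ler_wpM2l ?tensor_weight_ge0.
have -> : \sum_f tensor_weight p f * (s * wnorm2 q (H f))
    = s * \sum_b q b * wnorm2 (tensor_weight p) (kapply (tensor_kernel K) (Gb b)).
  rewrite /wnorm2 mulr_sumr; under eq_bigr do rewrite !mulr_sumr.
  rewrite exchange_big; apply: eq_bigr => b _; rewrite !mulr_sumr.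
  by apply: eq_bigr => f _; ring.
rewrite exprS -mulrA ler_wpM2l // mulr_sumr; apply: ler_sum => b _.
by rewrite mulrCA ler_wpM2l ?IH.
Qed.

End Tensorization.
Arguments tensor_weight {R A} w {n} x.
Arguments tensor_kernel {R A B} K {n} x y.

Section XorGame.
Variables (R : realType) (Sigma Gamma : finType) (m : nat).
Variables (mu : Sigma -> Gamma -> R) (t : Sigma -> Gamma -> 'Z_m).
Hypothesis m_gt1 : (1 < m)%N.
Hypothesis mu_ge0 : forall x y, 0 <= mu x y.
Hypothesis mu_sum1 : \sum_x \sum_y mu x y = 1.
Hypothesis connected : game_connected mu.
Hypothesis value_lt1 : game_value mu t < 1.

Local Notation W x y := (omegaZ R (t x y)).

Lemma win_prob_le_value f g : win_prob mu t f g <= game_value mu t.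
Proof.
apply: le_trans (le_bigmax_seq 0 g predT _ (mem_index_enum g) isT) _.
exact: (le_bigmax_seq 0 f predT (fun f => \big[Num.max/0]_g win_prob mu t f g)
          (mem_index_enum f) isT).
Qed.

Lemma exists_losing_edge (f : {ffun Sigma -> 'Z_m}) (g : {ffun Gamma -> 'Z_m}) :
  exists x y, 0 < mu x y /\ f x + g y != t x y.
Proof.
have [/existsP[x /existsP[y /andP[mu_pos lose]]]|/existsPn all_win] :=
  boolP [exists x, exists y, (0 < mu x y) && (f x + g y != t x y)].
  by exists x, y.
suff win1 : win_prob mu t f g = 1.
  by move: (win_prob_le_value f g); rewrite win1 leNgt value_lt1.
rewrite /win_prob -mu_sum1; apply: eq_bigr => x _.
rewrite big_mkcond /=; apply: eq_bigr => y _; case: eqP => // lose.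
have /existsPn /(_ y) := all_win x; rewrite negb_and => /orP[|]; last by move/negPn/eqP.
by rewrite -leNgt => mu_le0; apply/eqP; rewrite eq_le mu_le0 mu_ge0.
Qed.

Definition vertex_val (f : Sigma -> R[i]) (g : Gamma -> R[i]) (v : Sigma + Gamma) :=
  match v with inl x => f x | inr y => g y end.

Definition frustration (f : Sigma -> R[i]) (g : Gamma -> R[i]) : R :=
  \sum_x \sum_y mu x y * normc2 (f x - W x y * g y).

Lemma frustration_ge0 f g : 0 <= frustration f g.
Proof. by do 2!apply: sumr_ge0 => ? _; rewrite mulr_ge0 ?normc2_ge0. Qed.

Lemma edge_le_frustration f g x y :
  mu x y * normc2 (f x - W x y * g y) <= frustration f g.
Proof.
apply: le_trans (ler_sum_term _ _) (ler_sum_term _ _) => [y'|x'].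
  by rewrite mulr_ge0 ?normc2_ge0.
by apply: sumr_ge0 => y' _; rewrite mulr_ge0 ?normc2_ge0.
Qed.

Section Propagation.
Variables (f : Sigma -> R[i]) (g : Gamma -> R[i]) (eta : R).
Hypothesis eta_ge0 : 0 <= eta.
Hypothesis edge_err : forall x y, 0 < mu x y -> normc2 (f x - W x y * g y) <= eta.
Local Notation vtx := (vertex_val f g).

Lemma near_rotation_edge z u v (k : 'Z_m) (b : R) : supp_graph mu u v ->
  normc2 (vtx u - omegaZ R k * z) <= b ->
  exists k' : 'Z_m, normc2 (vtx v - omegaZ R k' * z) <= 2 * b + 2 * eta.
Proof.
case: u v => [x|y] [x'|y'] //= mu_pos close.
- exists (k - t x y').
  have -> : g y' - omegaZ R (k - t x y') * z
      = omegaZ R (- t x y') * ((f x - omegaZ R k * z) - (f x - W x y' * g y')).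
    by rewrite omegaZD // -[g y' in LHS]mul1r -(@omegaZN R m m_gt1 (t x y')); ring.
  rewrite normc2M normc2_omegaZ // mul1r.
  apply: le_trans (normc2D_le _ _) _; rewrite normc2N.
  by rewrite lerD // ler_pM2l // edge_err.
- exists (t x' y + k).
  have -> : f x' - omegaZ R (t x' y + k) * z
      = (f x' - W x' y * g y) + W x' y * (g y - omegaZ R k * z).
    by rewrite omegaZD //; ring.
  apply: le_trans (normc2D_le _ _) _; rewrite normc2M normc2_omegaZ // mul1r addrC.
  by rewrite lerD // ler_pM2l // edge_err.
Qed.

Lemma near_rotation_path z p u (k : 'Z_m) (b : R) : 0 <= b -> path (supp_graph mu) u p ->
  normc2 (vtx u - omegaZ R k * z) <= b ->
  exists k' : 'Z_m, normc2 (vtx (last u p) - omegaZ R k' * z) <= 4 ^+ size p * (b + eta).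
Proof.
elim: p u k b => [|v p IH] u k b b_ge0 /=.
  by move=> _ close; exists k; rewrite expr0 mul1r (le_trans close) ?lerDl.
case/andP=> uv path_vp /(near_rotation_edge uv) [k' close].
have [|k'' far] := IH v k' _ _ path_vp close; first by rewrite addr_ge0 ?mulr_ge0.
exists k''; apply: le_trans far _; rewrite exprSr -mulrA ler_wpM2l ?exprn_ge0 //.
by move: eta_ge0; lra.
Qed.

Lemma near_rotation v0 v : exists k : 'Z_m,
  normc2 (vtx v - omegaZ R k * vtx v0) <= 4 ^+ #|{: Sigma + Gamma}| * eta.
Proof.
have /connectP[p0 path_p0 ->] := connected v0 v.
have [p path_p uniq_p _] := shortenP path_p0.
have start : normc2 (vtx v0 - omegaZ R (0 : 'Z_m) * vtx v0) <= 0.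
  by rewrite omegaZ0 mul1r subrr normc2_real expr0n.
have [k far] := near_rotation_path (lexx 0) path_p start.
exists k; apply: le_trans far _; rewrite add0r ler_wpM2r // ler_eXn2l; last lra.
apply: ltnW; rewrite -[(size p).+1]/(size (v0 :: p)) -(card_uniqP uniq_p).
exact: max_card.
Qed.

Variable gamma : R.
Hypothesis gamma_ge0 : 0 <= gamma.
Hypothesis gamma_gap : forall a : 'Z_m, a != 0 -> 1 <= gamma * normc2 (omegaZ R a - 1).

Lemma vertex_val_small v0 :
  normc2 (vtx v0) <= gamma * (3 * (2 * 4 ^+ #|{: Sigma + Gamma}| + 1)) * eta.
Proof.
set D := 4 ^+ _; set z := vtx v0.
(* The rotation indices [k] form a strategy, which loses on some edge [(x, y)];
   there [f x] and [W x y * g y] are near two different rotations of [z]. *)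
have [k close] := fin_all_exists (near_rotation v0).
have [x [y [mu_pos]]] := exists_losing_edge [ffun x => k (inl x)] [ffun y => - k (inr y)].
rewrite !ffunE => lose.
pose a := k (inl x) - (t x y + k (inr y)).
have a_neq0 : a != 0 by apply: contra lose; rewrite subr_eq0 => /eqP->; rewrite addrK.
have mismatch : normc2 (omegaZ R a - 1) * normc2 z <= 3 * (2 * D + 1) * eta.
  have -> : normc2 (omegaZ R a - 1) * normc2 z
      = normc2 (- (f x - omegaZ R (k (inl x)) * z) + (f x - W x y * g y)
                + W x y * (g y - omegaZ R (k (inr y)) * z)).
    rewrite -[LHS]mulr1 -(normc2_omegaZ R (t x y + k (inr y))) -!normc2M.
    congr normc2; rewrite -[k (inl x)](subrK (t x y + k (inr y))) -/a.
    by rewrite !omegaZD //; ring.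
  apply: le_trans (normc2D3_le _ _ _) _; rewrite normc2N normc2M normc2_omegaZ // mul1r.
  have -> : 3 * (2 * D + 1) * eta = 3 * (D * eta + eta + D * eta) by ring.
  rewrite ler_wpM2l // !lerD // ?edge_err //.
    exact: (close (inl x)).
  exact: (close (inr y)).
apply: (@le_trans _ _ (gamma * (normc2 (omegaZ R a - 1) * normc2 z))).
  by rewrite mulrA -[X in X <= _]mul1r ler_wpM2r ?normc2_ge0 ?gamma_gap.
by rewrite -mulrA ler_wpM2l.
Qed.

End Propagation.

Lemma vertex_val_coercive : exists2 C, 0 <= C &
  forall f g v, normc2 (vertex_val f g v) <= C * frustration f g.
Proof.
have [gamma gamma_ge0 gamma_gap] := omegaZ_gap R m_gt1.
have [kappa kappa_ge0 kappa_mu] := @exists_inv_bound _ _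
  (fun p : Sigma * Gamma => 0 < mu p.1 p.2) (fun p => mu p.1 p.2) (fun p => id).
exists (gamma * (3 * (2 * 4 ^+ #|{: Sigma + Gamma}| + 1)) * kappa).
  by rewrite !mulr_ge0 ?addr_ge0 ?exprn_ge0.
move=> f g v; rewrite -mulrA; apply: vertex_val_small => //.
  by rewrite mulr_ge0 ?frustration_ge0.
move=> x y mu_pos; apply: (@le_trans _ _ (kappa * (mu x y * normc2 (f x - W x y * g y)))).
  by rewrite mulrA -[X in X <= _]mul1r ler_wpM2r ?normc2_ge0 // (kappa_mu (x, y)).
by rewrite ler_wpM2l ?edge_le_frustration.
Qed.

Definition marginalX x := \sum_y mu x y.
Definition marginalY y := \sum_x mu x y.

Lemma marginalX_ge0 x : 0 <= marginalX x. Proof. exact: sumr_ge0. Qed.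
Lemma marginalY_ge0 y : 0 <= marginalY y. Proof. exact: sumr_ge0. Qed.

Lemma sum_marginalX : \sum_x marginalX x = 1. Proof. exact: mu_sum1. Qed.
Lemma sum_marginalY : \sum_y marginalY y = 1.
Proof. by rewrite /marginalY exchange_big. Qed.

(* If the marginal vanishes then so does [mu x y], and [_ / 0 = 0] is harmless. *)
Lemma mu_factor x y : mu x y = marginalX x * (mu x y / marginalX x).
Proof.
have [mX0|mX_neq0] := eqVneq (marginalX x) 0; last by rewrite mulrC divfK.
suff -> : mu x y = 0 by rewrite mul0r mulr0.
move/eqP: mX0; rewrite psumr_eq0 => [/allP /(_ y (mem_index_enum y)) /eqP //|y' _].
exact: mu_ge0.
Qed.

Definition xor_kernel x y : R[i] := (mu x y / marginalX x)%:C * Tchar R t x y.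

Definition xor_form (f : Sigma -> R[i]) (h : Gamma -> R[i]) : R[i] :=
  \sum_x \sum_y (mu x y)%:C * Tchar R t x y * f x * h y.

Lemma xor_form_kapply f h :
  xor_form f h = \sum_x (marginalX x)%:C * (f x * kapply xor_kernel h x).
Proof.
apply: eq_bigr => x _; rewrite /kapply !mulr_sumr; apply: eq_bigr => y _.
by rewrite {1}(mu_factor x y) rmorphM /xor_kernel /=; ring.
Qed.

Lemma frustration_conj f h :
  frustration f (fun y => (h y)^*)
    = wnorm2 marginalX f + wnorm2 marginalY h - 2 * complex.Re (xor_form f h).
Proof.
have termE x y : mu x y * normc2 (f x - W x y * (h y)^*)
    = mu x y * normc2 (f x) + mu x y * normc2 (h y)
      - 2 * complex.Re ((mu x y)%:C * Tchar R t x y * f x * h y).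
  rewrite normc2B normc2M normc2_omegaZ // normc2J mul1r Tchar_omegaZ.
  by move: (W x y) (f x) (h y) => [a b] [c d] [e g] /=; ring.
have -> : wnorm2 marginalY h = \sum_x \sum_y mu x y * normc2 (h y).
  by rewrite /wnorm2 exchange_big; apply: eq_bigr => y _; rewrite mulr_suml.
rewrite /wnorm2 /xor_form Re_sum mulr_sumr -big_split -sumrB /=.
apply: eq_bigr => x _; rewrite Re_sum mulr_sumr /marginalX mulr_suml -big_split -sumrB /=.
by apply: eq_bigr => y _; exact: termE.
Qed.

Lemma wnorm2_le_frustration : exists2 C, 0 <= C & forall f g,
  wnorm2 marginalX f + wnorm2 marginalY g <= C * frustration f g.
Proof.
have [C C_ge0 coercive] := vertex_val_coercive.
exists (C + C); first by rewrite addr_ge0.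
move=> f g; rewrite mulrDl lerD //.
- rewrite -[_ * _]mul1r -sum_marginalX mulr_suml; apply: ler_sum => x _.
  by rewrite ler_wpM2l ?marginalX_ge0 // (coercive f g (inl x)).
- rewrite -[_ * _]mul1r -sum_marginalY mulr_suml; apply: ler_sum => y _.
  by rewrite ler_wpM2l ?marginalY_ge0 // (coercive f g (inr y)).
Qed.

Lemma xor_form_bound : exists r, [/\ 0 < r, r < 1 & forall f h,
  2 * complex.Re (xor_form f h) <= r * (wnorm2 marginalX f + wnorm2 marginalY h)].
Proof.
have [C C_ge0 coercive] := wnorm2_le_frustration.
have C2_gt0 : 0 < 2 * C + 2 by lra.
exists (1 - (2 * C + 2)^-1); split.
- by rewrite subr_gt0 invf_lt1 //; lra.
- by rewrite ltrBlDr ltrDl invr_gt0.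
move=> f h; have := coercive f (fun y => (h y)^*).
have -> : wnorm2 marginalY (fun y => (h y)^*) = wnorm2 marginalY h.
  by apply: eq_bigr => y _; rewrite normc2J.
have := frustration_ge0 f (fun y => (h y)^*); rewrite frustration_conj.
set N := wnorm2 _ f + _; set B := 2 * _ => Q_ge0 N_le.
have : N <= (2 * C + 2) * (N - B) by apply: le_trans N_le _; rewrite ler_wpM2r //; lra.
rewrite -ler_pdivrMl // mulrBl mul1r mulrC; lra.
Qed.

Lemma xor_kernel_contraction_of_form_bound r : 0 < r ->
  (forall f h, 2 * complex.Re (xor_form f h)
                 <= r * (wnorm2 marginalX f + wnorm2 marginalY h)) ->
  forall h, wnorm2 marginalX (kapply xor_kernel h) <= r ^+ 2 * wnorm2 marginalY h.
Proof.
move=> r_gt0 form_le h; set u := kapply xor_kernel h; set N := wnorm2 marginalX u.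
(* Test against [f = conj u / r], for which the form is the real number [N / r]. *)
have := form_le (fun x => (r^-1)%:C * (u x)^*) h.
have -> : xor_form (fun x => (r^-1)%:C * (u x)^*) h = (r^-1 * N)%:C.
  rewrite xor_form_kapply /N /wnorm2 mulr_sumr rmorph_sum; apply: eq_bigr => x _.
  by rewrite -/u -mulrA (mulrC (u x)^*) mulcJ -!rmorphM /= mulrCA.
have -> : wnorm2 marginalX (fun x => (r^-1)%:C * (u x)^*) = r^-1 ^+ 2 * N.
  rewrite /N /wnorm2 mulr_sumr; apply: eq_bigr => x _.
  by rewrite normc2M normc2_real normc2J mulrCA.
rewrite /= -/(wnorm2 marginalY h) => le2.
have : r^-1 * N <= r * wnorm2 marginalY h.
  have expand : r * (r^-1 ^+ 2 * N + wnorm2 marginalY h)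
      = r^-1 * N + r * wnorm2 marginalY h by field; rewrite gt_eqF.
  by rewrite expand in le2; lra.
by rewrite -(ler_pM2l r_gt0) mulrA mulfV ?gt_eqF // mul1r mulrA -expr2.
Qed.

Lemma xor_kernel_contraction : exists r, [/\ 0 < r, r < 1 &
  forall h, wnorm2 marginalX (kapply xor_kernel h) <= r ^+ 2 * wnorm2 marginalY h].
Proof.
have [r [r_gt0 r_lt1 form_le]] := xor_form_bound.
by exists r; split => //; exact: xor_kernel_contraction_of_form_bound.
Qed.

Lemma xor_correlation_kapply n (F : {ffun 'I_n -> Sigma} -> R[i])
    (G : {ffun 'I_n -> Gamma} -> R[i]) :
  xor_correlation mu t F G
    = \sum_x (tensor_weight marginalX x)%:C * (F x * kapply (tensor_kernel xor_kernel) G x).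
Proof.
apply: eq_bigr => x _; rewrite /kapply !mulr_sumr; apply: eq_bigr => y _.
rewrite /tensor_kernel /xor_kernel big_split /= -rmorph_prod.
have -> : \prod_i mu (x i) (y i)
    = tensor_weight marginalX x * \prod_i (mu (x i) (y i) / marginalX (x i)).
  by rewrite -big_split; apply: eq_bigr => i _; exact: mu_factor.
by rewrite rmorphM /=; ring.
Qed.

Lemma normc2_xor_correlation_le r n (F : {ffun 'I_n -> Sigma} -> R[i])
    (G : {ffun 'I_n -> Gamma} -> R[i]) :
  (forall h, wnorm2 marginalX (kapply xor_kernel h) <= r ^+ 2 * wnorm2 marginalY h) ->
  (forall x, normc2 (F x) <= 1) -> (forall y, normc2 (G y) <= 1) ->
  normc2 (xor_correlation mu t F G) <= (r ^+ 2) ^+ n.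
Proof.
move=> contraction F_le1 G_le1; rewrite xor_correlation_kapply.
have twX_ge0 (x : {ffun 'I_n -> Sigma}) : 0 <= tensor_weight marginalX x.
  exact/tensor_weight_ge0/marginalX_ge0.
have twY_ge0 (y : {ffun 'I_n -> Gamma}) : 0 <= tensor_weight marginalY y.
  exact/tensor_weight_ge0/marginalY_ge0.
have twX_sum1 : \sum_(x : {ffun 'I_n -> Sigma}) tensor_weight marginalX x = 1.
  by rewrite sum_tensor_weight sum_marginalX expr1n.
apply: le_trans (normc2_wsum_le twX_ge0 twX_sum1
                  (fun x => F x * kapply (tensor_kernel xor_kernel) G x)) _.
apply: (@le_trans _ _
  (wnorm2 (tensor_weight marginalX) (kapply (tensor_kernel xor_kernel) G))).
  by apply: ler_sum => x _; rewrite normc2M ler_wpM2l // ler_piMl ?normc2_ge0.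
apply: le_trans (tensor_contraction marginalX_ge0 marginalY_ge0 (sqr_ge0 r) contraction G) _.
have rn_ge0 : 0 <= (r ^+ 2) ^+ n by rewrite exprn_ge0 ?sqr_ge0.
rewrite -[X in _ <= X]mulr1 ler_wpM2l //.
apply: (@le_trans _ _ (\sum_(y : {ffun 'I_n -> Gamma}) tensor_weight marginalY y)).
  by apply: ler_sum => y _; rewrite ler_piMr.
by rewrite sum_tensor_weight sum_marginalY expr1n.
Qed.

End XorGame.

Lemma powR2_log (R : realType) (r : R) n :
  0 < r -> 2 `^ (- (- ln r / ln 2 * n%:R)) = r ^+ n.
Proof.
move=> r_gt0; have ln2_gt0 : 0 < ln (2 : R) by rewrite ln_gt0 // ltr1n.
rewrite /powR (negbTE (lt0r_neq0 _)) ?ltr0n //.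
have -> : - (- ln r / ln 2 * n%:R) * ln 2 = n%:R * ln r by field; rewrite gt_eqF.
by rewrite expRM_natl lnK.
Qed.

Theorem lemma2p2 (R : realType) (Sigma Gamma : finType) (m : nat)
  (mu : Sigma -> Gamma -> R) (t : Sigma -> Gamma -> 'Z_m) :
  (1 < m)%N ->
  is_distr mu ->
  game_connected mu ->
  game_value mu t < 1 ->
  exists c : R, 0 < c /\
    forall (n : nat) (F : {ffun 'I_n -> Sigma} -> R[i]) (G : {ffun 'I_n -> Gamma} -> R[i]),
      (forall x, `|F x| <= 1) ->
      (forall y, `|G y| <= 1) ->
      `|xor_correlation mu t F G| <= (2 `^ (- (c * n%:R)))%:C.
Proof.
move=> m_gt1 [mu_ge0 mu_sum1] connected value_lt1.
have [r [r_gt0 r_lt1 contraction]] :=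
  xor_kernel_contraction m_gt1 mu_ge0 mu_sum1 connected value_lt1.
exists (- ln r / ln 2); split.
  by rewrite divr_gt0 ?oppr_gt0 ?ln_lt0 ?r_gt0 // ln_gt0 // ltr1n.
move=> n F G F_le1 G_le1; rewrite powR2_log //.
apply: normc_le; first exact/exprn_ge0/ltW.
rewrite -exprM mulnC exprM.
exact: normc2_xor_correlation_le contraction (fun x => normc2_le1 (F_le1 x))
  (fun y => normc2_le1 (G_le1 y)).
Qed.
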